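(* In the FIND setting of the context, fix a leaf cluster $\mathcal C_r$, a consistent ordering of $\mathcal T_r^+$, and perform the elimination $\mathbf A_{g+}=\mathbf L_g^{-1}\mathbf A_g$ while updating $\boldsymbol\Sigma_{g+}=\mathbf L_g^{-1}\boldsymbol\Sigma_g\mathbf L_g^{-\dagger}$ (starting from $\boldsymbol\Sigma_{g_1}=\boldsymbol\Sigma$). Then for every node $g$ of $\mathcal T_r^+$: (I) for every node $h$ of $\mathcal T_r^+$ with $\mathcal S_h\ge\mathcal S_g$ (i.e. $h=g$ or $h$ after $g$), $\boldsymbol\Sigma_g(\mathcal S_h,\mathcal S_{>h}\setminus\mathcal B_h)=0$ and $\boldsymbol\Sigma_g(\mathcal S_{>h}\setminus\mathcal B_h,\mathcal S_h)=0$; (II) (a) $\boldsymbol\Sigma_{g+}(\mathcal S_{\le g},\mathcal S_{\le g})=\boldsymbol\Sigma_g(\mathcal S_{\le g},\mathcal S_{\le g})$; (b) $\boldsymbol\Sigma_{g+}(\mathcal M,\mathcal S_{>g}\setminus\mathcal B_g)=\boldsymbol\Sigma_g(\mathcal M,\mathcal S_{>g}\setminus\mathcal B_g)$; (c) $\boldsymbol\Sigma_{g+}(\mathcal S_{>g}\setminus\mathcal B_g,\mathcal M)=\boldsymbol\Sigma_g(\mathcal S_{>g}\setminus\mathcal B_g,\mathcal M)$; (III) $\boldsymbol\Sigma_{g+}(\mathcal B_g,\mathcal B_g)=\boldsymbol\Sigma_g(\mathcal B_g,\mathcal B_g)-\mathcal L_g\boldsymbol\Sigma_g(\mathcal S_g,\mathcal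 B_g)-\boldsymbol\Sigma_g(\mathcal B_g,\mathcal S_g)\mathcal L_g^\dagger+\mathcal L_g\boldsymbol\Sigma_g(\mathcal S_g,\mathcal S_g)\mathcal L_g^\dagger$.
   Context: Setting (FIND). $\mathcal M$ is a finite set of mesh nodes; $\mathbf A$ is an invertible complex matrix indexed by $\mathcal M\times\mathcal M$, structurally symmetric ($A_{ij}\neq0\iff A_{ji}\neq0$); distinct nodes $i,j$ are connected if $A_{ij}\neq 0$. $\boldsymbol\Sigma$ is a complex matrix indexed by $\mathcal M\times\mathcal M$ with $\Sigma_{ij}=0$ whenever $i\neq j$ and $i,j$ are not connected. $\dagger$ denotes conjugate transpose and $\mathbf X^{-\dagger}=(\mathbf X^{-1})^\dagger$. For $X,Y\subseteq\mathcal M$, $\mathbf X(X,Y)$ is the submatrix with rows in $X$ and columns in $Y$. For a cluster $\mathcal C\subseteq\mathcal M$: boundary set $\mathcal B_{\mathcal C}=\{i\in\mathcal C: A_{ij}\neq 0\text{ for some } j\notin\mathcal C\}$, inner set $\mathcal I_{\mathcal C}=\mathcal C\setminus\mathcal B_{\mathcal C}$; for $\mathcal C_g$ write $\mathcal B_g,\mathcal I_g$. Cluster tree: $\mathcal T$ is a rooted binary tree of clusters with root $\mathcal M$, each non-leaf cluster the disjoint union of its two children. For a leaf $\mathcal C_r$ with path $r=a_0,\dots,a_d$ (root) and $b_k$ the sibling of $a_k$, the augmented tree $\mathcal T_r^+$ has root $\mathcal C_{-r}=\mathcal M\setminus\mathcal C_r$; for $0\le k\le d-2$, $\mathcal C_{-a_k}=\mathcal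 M\setminus\mathcal C_{a_k}$ has children $\mathcal C_{b_k}$ and $\mathcal C_{-a_{k+1}}$, with $\mathcal C_{-a_{d-1}}$ identified with $\mathcal C_{b_{d-1}}$ (equal sets); each basic cluster $\mathcal C_{b_k}$ carries its subtree from $\mathcal T$. Private inner nodes: $\mathcal S_g=\mathcal I_g$ for a leaf $g$ of $\mathcal T_r^+$; $\mathcal S_g=\mathcal I_g\setminus(\mathcal I_i\cup\mathcal I_j)$ if $g$ has children $i,j$. The sets $\mathcal S_g$ ($g\in\mathcal T_r^+$), $\mathcal B_{-r}$, $\mathcal C_r$ partition $\mathcal M$. Consistent ordering: a total order $g_1,\dots,g_m$ of the nodes of $\mathcal T_r^+$ with every node after all its descendants; $\mathcal S_h<\mathcal S_g$ means $h$ precedes $g$. $\mathcal S_{<g}$, $\mathcal S_{\le g}$: union of $\mathcal S_h$ over $h$ preceding $g$ (resp. preceding or equal); $\mathcal S_{>g}$: union of $\mathcal S_h$ over $h$ after $g$, together with $\mathcal B_{-r}\cup\mathcal C_r$. Elimination: $\mathbf A_{g_1}=\mathbf A$, $\boldsymbol\Sigma_{g_1}=\boldsymbol\Sigma$. For each $g$ (with $\mathbf A_g(\mathcal S_g,\mathcal S_g)$ assumed invertible), $\mathcal L_g=\mathbf A_g(\mathcal B_g,\mathcal S_g)\mathbf A_g(\mathcal S_g,\mathcal S_g)^{-1}$, $\mathbf L_g$ is the identity on $\mathcal M$ except $\mathbf L_g(\mathcal B_g,\mathcal S_g)=\mathcal L_g$ (this is the block Gaussian elimination factor of the columns $\mathcal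 S_g$), $\mathbf A_{g+}=\mathbf L_g^{-1}\mathbf A_g$, $\boldsymbol\Sigma_{g+}=\mathbf L_g^{-1}\boldsymbol\Sigma_g\mathbf L_g^{-\dagger}$, and $\mathbf A_{g_{t+1}}=\mathbf A_{g_t+}$, $\boldsymbol\Sigma_{g_{t+1}}=\boldsymbol\Sigma_{g_t+}$. *)

From HB Require Import structures.
From mathcomp Require Import all_boot all_order all_algebra.
Set Implicit Arguments. Unset Strict Implicit. Unset Printing Implicit Defensive.
Import Order.TTheory GRing.Theory Num.Theory.
Local Open Scope ring_scope.

(* Mesh nodes M = 'I_n; scalars in a numeric closed field C (e.g. the complex
   numbers), whose conjugation is Num.conj. *)

Section FIND.
Variables (C : numClosedFieldType) (n : nat).

Definition ctr (p q : nat) (X : 'M[C]_(p, q)) : 'M[C]_(q, p) :=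
  (map_mx (@Num.conj C) X)^T.

(* submatrix X(R, K) with rows in R and columns in K (in increasing order) *)
Definition subm (R K : {set 'I_n}) (X : 'M[C]_n) : 'M[C]_(#|R|, #|K|) :=
  \matrix_(i < #|R|, j < #|K|) X (enum_val i) (enum_val j).

(* embedding of the index set R into M (so that emb R * Y * (emb K)^T is the
   n x n matrix having Y as its (R,K) block and zeros elsewhere) *)
Definition emb (R : {set 'I_n}) : 'M[C]_(n, #|R|) :=
  \matrix_(i < n, k < #|R|) (i == enum_val k)%:R.

Definition bnd (A : 'M[C]_n) (Cl : {set 'I_n}) : {set 'I_n} :=
  [set i in Cl | [exists j, (j \notin Cl) && (A i j != 0)]].
Definition inn (A : 'M[C]_n) (Cl : {set 'I_n}) : {set 'I_n} := Cl :\: bnd A Cl.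

Inductive ctree := CLeaf of {set 'I_n} | CNode of {set 'I_n} & ctree & ctree.

Definition label (t : ctree) : {set 'I_n} :=
  match t with CLeaf X => X | CNode X _ _ => X end.

Fixpoint wf_ctree (t : ctree) : Prop :=
  match t with
  | CLeaf _ => True
  | CNode X l r => [/\ X = label l :|: label r, [disjoint label l & label r],
                      wf_ctree l & wf_ctree r]
  end.

Definition cluster_tree (t : ctree) : Prop := label t = setT /\ wf_ctree t.

(* nodes are addressed by paths from the root: false = left, true = right *)
Fixpoint sub_at (t : ctree) (p : seq bool) : option ctree :=
  match p, t with
  | [::], _ => Some t
  | b :: p', CNode _ l r => sub_at (if b then r else l) p'
  | _ :: _, CLeaf _ => None
  end.

Fixpoint nodes (t : ctree) : seq (seq bool) :=
  match t with
  | CLeaf _ => [:: [::]]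
  | CNode _ l r => [::] :: (map (cons false) (nodes l) ++ map (cons true) (nodes r))
  end.

Definition node_label (t : ctree) (p : seq bool) : {set 'I_n} :=
  oapp label set0 (sub_at t p).

(* C_r is a leaf of T reached by the nonempty path p (so r is not the root) *)
Definition is_leaf_path (t : ctree) (p : seq bool) : Prop :=
  p != [::] /\ exists X, sub_at t p = Some (CLeaf X).

(* Augmented tree T_r^+.  [aug_rec acc t p]: t is the subtree of T at the
   current node a_k of the path to r, acc is the already built tree of
   C_{-a_k} = M \ C_{a_k}; p is the remaining path to r. *)
Fixpoint aug_rec (acc t : ctree) (p : seq bool) : ctree :=
  match p, t with
  | b :: p', CNode _ l r =>
      let a := if b then r else l in
      let s := if b then l else r in
      aug_rec (CNode (~: label a) s acc) a p'
  | _, _ => acc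
  end.

(* root step: C_{-a_{d-1}} is identified with the sibling C_{b_{d-1}} *)
Definition augtree (t : ctree) (p : seq bool) : ctree :=
  match p, t with
  | b :: p', CNode _ l r =>
      aug_rec (if b then l else r) (if b then r else l) p'
  | _, _ => t
  end.

Definition consistent_ordering (t : ctree) (ord : seq (seq bool)) : Prop :=
  perm_eq ord (nodes t) /\
  forall g h, g \in nodes t -> h \in nodes t -> prefix g h -> g != h ->
    (index h ord < index g ord)%N.

Variable A : 'M[C]_n.

Definition priv (t : ctree) (g : seq bool) : {set 'I_n} :=
  match sub_at t g with
  | Some (CLeaf X) => inn A X
  | Some (CNode X l r) => inn A X :\: (inn A (label l) :|: inn A (label r))
  | None => set0
  end.

Definition Bnode (t : ctree) (g : seq bool) : {set 'I_n} := bnd A (node_label t g).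

Section Order.
Variables (T : ctree) (p : seq bool) (ord : seq (seq bool)).
Let Tp := augtree T p.

Definition S_le (g : seq bool) : {set 'I_n} :=
  \bigcup_(h <- take (index g ord).+1 ord) priv Tp h.
Definition S_lt (g : seq bool) : {set 'I_n} :=
  \bigcup_(h <- take (index g ord) ord) priv Tp h.
(* S_{>g} also contains B_{-r} and C_r *)
Definition S_gt (g : seq bool) : {set 'I_n} :=
  (\bigcup_(h <- drop (index g ord).+1 ord) priv Tp h)
    :|: bnd A (label Tp) :|: node_label T p.

Definition Lcal (Ag : 'M[C]_n) (g : seq bool) :=
  subm (Bnode Tp g) (priv Tp g) Ag *m invmx (subm (priv Tp g) (priv Tp g) Ag).

Definition Lmat (Ag : 'M[C]_n) (g : seq bool) : 'M[C]_n :=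
  1%:M + emb (Bnode Tp g) *m Lcal Ag g *m (emb (priv Tp g))^T.

Definition elim_step (st : 'M[C]_n * 'M[C]_n) (g : seq bool) :=
  let L := Lmat st.1 g in
  (invmx L *m st.1, invmx L *m st.2 *m ctr (invmx L)).

(* (A_{g_{t+1}}, Sigma_{g_{t+1}}) ; for t = size ord this is the state after
   the last elimination *)
Definition state (Sigma : 'M[C]_n) (t : nat) : 'M[C]_n * 'M[C]_n :=
  foldl elim_step (A, Sigma) (take t ord).

End Order.
End FIND.

From Pilot Require Import Defs.
From HB Require Import structures.
From mathcomp Require Import all_boot all_order all_algebra.
Import Order.TTheory GRing.Theory Num.Theory.
Local Open Scope ring_scope.
Set Implicit Arguments. Unset Strict Implicit. Unset Printing Implicit Defensive.

(* The elimination step at g is the congruence by L_g^-1 = 1 - N_g, where N_g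
   is supported on rows B_g and columns S_g, two disjoint sets.  It therefore
   changes Sigma only in the rows and columns B_g, and only through the
   entries of Sigma in the rows and columns S_g.  By induction along the
   ordering, the block Sigma(S_h, S_{>h} \ B_h) stays zero for every node h
   not yet eliminated: initially because the cluster of h is coupled to the
   rest of the mesh only through its boundary, and at each step because, by
   the tree structure and the ordering, the boundary set B_g of the node g
   being eliminated cannot meet both S_h and S_{>h} \ B_h.  Since L_g is
   unipotent, no invertibility hypothesis is needed. *)

Lemma mem_drop_uniq (T : eqType) (s : seq T) i x : uniq s ->
  (x \in drop i s) = (x \in s) && (i <= index x s)%N.
Proof.
move=> us; case xs: (x \in s); last by apply/negbTE; apply: contraFN xs; apply: mem_drop.
rewrite leqNgt -in_take //; move: us xs.
rewrite -{1 2}(cat_take_drop i s) cat_uniq mem_cat => /and3P [_ /hasPn dis _].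
case/orP => [xt | xd]; first by rewrite xt; apply/negbTE; exact: contraTN (dis x) xt.
by rewrite xd (negbTE (dis x xd)).
Qed.

Lemma bigcup_seqP (I : eqType) (T : finType) (s : seq I) (F : I -> {set T}) x :
  reflect (exists2 i, i \in s & x \in F i) (x \in \bigcup_(i <- s) F i).
Proof.
elim: s => [|i s IH]; first by rewrite big_nil inE; right; case.
rewrite big_cons inE; apply: (iffP orP) => [[xi | /IH [j js xj]] | [j]].
- by exists i; rewrite ?mem_head.
- by exists j; rewrite // inE js orbT.
- by rewrite inE => /orP [/eqP -> | js] xj; [left | right; apply/IH; exists j].
Qed.

Section Embedding.
Variables (C : numClosedFieldType) (n : nat).
Implicit Types (R K : {set 'I_n}) (X Y : 'M[C]_n).

Lemma subm_eq R K X Y : (forall x y, x \in R -> y \in K -> X x y = Y x y) ->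
  subm R K X = subm R K Y.
Proof. by move=> eXY; apply/matrixP => a b; rewrite !mxE eXY ?enum_valP. Qed.

Lemma subm_eq0 R K X : (forall x y, x \in R -> y \in K -> X x y = 0) -> subm R K X = 0.
Proof. by move=> X0; apply/matrixP => a b; rewrite !mxE X0 ?enum_valP. Qed.

Lemma emb_notin R i a : i \notin R -> emb C R i a = 0.
Proof. by apply: contraNeq; rewrite mxE pnatr_eq0 eqb0 negbK => /eqP ->; apply: enum_valP. Qed.

Lemma trmx_emb_mulmx R m (Z : 'M[C]_(n, m)) a j :
  ((emb C R)^T *m Z) a j = Z (enum_val a) j.
Proof.
rewrite mxE (bigD1 (enum_val a)) //= big1 => [|k /negbTE ka]; rewrite !mxE ?eqxx.
  by rewrite mul1r addr0.
by rewrite ka mul0r.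
Qed.

Lemma mulmx_emb R m (Z : 'M[C]_(m, n)) i a : (Z *m emb C R) i a = Z i (enum_val a).
Proof.
rewrite mxE (bigD1 (enum_val a)) //= big1 => [|k /negbTE ka]; rewrite !mxE ?eqxx.
  by rewrite mulr1 addr0.
by rewrite ka mulr0.
Qed.

Lemma subm_emb R K X : subm R K X = (emb C R)^T *m X *m emb C K.
Proof. by apply/matrixP => a b; rewrite mulmx_emb trmx_emb_mulmx !mxE. Qed.

Lemma emb_mulmx_notin R m (Z : 'M[C]_(#|R|, m)) i j : i \notin R -> (emb C R *m Z) i j = 0.
Proof. by move=> iR; rewrite mxE big1 // => k _; rewrite emb_notin // mul0r. Qed.

Lemma mulmx_trmx_emb_notin R m (Z : 'M[C]_(m, #|R|)) i j :
  j \notin R -> (Z *m (emb C R)^T) i j = 0.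
Proof. by move=> jR; rewrite mxE big1 // => k _; rewrite mxE emb_notin // mulr0. Qed.

Lemma trmx_emb_emb_id R : (emb C R)^T *m emb C R = 1%:M.
Proof.
by apply/matrixP => a b; rewrite mulmx_emb !mxE (inj_eq enum_val_inj) eq_sym.
Qed.

Lemma trmx_emb_emb_disjoint R K : [disjoint R & K] -> (emb C R)^T *m emb C K = 0.
Proof.
move=> dRK; apply/matrixP => a b; rewrite mulmx_emb !mxE.
by case: eqP => // eab; have := enum_valP b; rewrite eab (disjointFr dRK (enum_valP a)).
Qed.

Lemma ctr_mulmx m k l (Z : 'M[C]_(m, k)) (W : 'M[C]_(k, l)) : ctr (Z *m W) = ctr W *m ctr Z.
Proof. by rewrite /ctr map_mxM trmx_mul. Qed.

Lemma ctr_emb R : ctr (emb C R) = (emb C R)^T.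
Proof. by apply/matrixP => a b; rewrite !mxE conjC_nat. Qed.

Lemma ctr_trmx_emb R : ctr (emb C R)^T = emb C R.
Proof. by apply/matrixP => a b; rewrite !mxE conjC_nat. Qed.

Lemma ctr1B (Z : 'M[C]_n) : ctr (1%:M - Z) = 1%:M - ctr Z.
Proof. by rewrite /ctr map_mxB map_mx1 linearB /= trmx1. Qed.

End Embedding.

Section EliminationStep.
Variables (C : numClosedFieldType) (n : nat) (B S : {set 'I_n}).
Variable Lc : 'M[C]_(#|B|, #|S|).
Hypothesis dSB : [disjoint S & B].
Implicit Type X : 'M[C]_n.

Let N := emb C B *m Lc *m (emb C S)^T.
Let Linv := invmx (1%:M + N).

Lemma ctr_elim_nilp : ctr N = emb C S *m ctr Lc *m (emb C B)^T.
Proof. by rewrite /N !ctr_mulmx ctr_trmx_emb ctr_emb mulmxA. Qed.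

Lemma invmx_elim : Linv = 1%:M - N.
Proof.
have N2 : N *m N = 0.
  by rewrite /N -!mulmxA (mulmxA (emb C S)^T) trmx_emb_emb_disjoint // mul0mx !mulmx0.
have LLinv : (1%:M + N) *m (1%:M - N) = 1%:M.
  by rewrite mulmxDl mulmxBr !mul1mx mulmxBr mulmx1 N2 subr0 subrK.
have [Lunit _] := mulmx1_unit LLinv.
by rewrite -[RHS](mulKmx Lunit) LLinv mulmx1.
Qed.

Lemma congr_elim X : Linv *m X *m ctr Linv = X - N *m X - X *m ctr N + N *m X *m ctr N.
Proof.
rewrite invmx_elim ctr1B mulmxBl mul1mx mulmxBr mulmx1.
by rewrite mulmxBl opprD opprK addrA.
Qed.

(* Only the entries with a row or column in B change, and N X, X N^* read
   X only through the rows, resp. columns, in S. *)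
Lemma congr_elim_entry X i j :
  (i \notin B \/ forall k, k \in S -> X k j = 0) ->
  (j \notin B \/ forall l, l \in S -> X i l = 0) ->
  (i \notin B \/ j \notin B) ->
  (Linv *m X *m ctr Linv) i j = X i j.
Proof.
move=> Si Sj Bij.
have entryD (U V : 'M[C]_n) : (U + V) i j = U i j + V i j by rewrite mxE.
have entryN (U : 'M[C]_n) : (- U) i j = - U i j by rewrite mxE.
rewrite congr_elim !entryD !entryN.
have -> : (N *m X) i j = 0.
  case: Si => [iB | X0]; first by rewrite /N -!mulmxA emb_mulmx_notin.
  rewrite /N -mulmxA mxE big1 // => a _.
  by rewrite trmx_emb_mulmx X0 ?enum_valP // mulr0.
have -> : (X *m ctr N) i j = 0.
  rewrite ctr_elim_nilp; case: Sj => [jB | X0]; first by rewrite !mulmxA mulmx_trmx_emb_notin.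
  rewrite !mulmxA mxE big1 // => b _; rewrite mxE big1 ?mul0r // => a _.
  by rewrite mulmx_emb X0 ?enum_valP // mul0r.
have -> : (N *m X *m ctr N) i j = 0.
  case: Bij => [iB | jB]; first by rewrite /N -!mulmxA emb_mulmx_notin.
  by rewrite ctr_elim_nilp !mulmxA mulmx_trmx_emb_notin.
by rewrite !subr0 addr0.
Qed.

Lemma subm_congr_elim X :
  subm B B (Linv *m X *m ctr Linv) =
  subm B B X - Lc *m subm S B X - subm B S X *m ctr Lc + Lc *m subm S S X *m ctr Lc.
Proof.
rewrite congr_elim !subm_emb ctr_elim_nilp /N.
rewrite !mulmxDr !mulmxN !mulmxDl !mulNmx !mulmxA trmx_emb_emb_id mul1mx.
by rewrite -!mulmxA trmx_emb_emb_id mulmx1 !mulmxA.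
Qed.

End EliminationStep.

Section ClusterTrees.
Variable n : nat.
Implicit Types (t u : ctree n) (g h q : seq bool).

Lemma sub_at_cat t g q : sub_at t (g ++ q) = obind (fun u => sub_at u q) (sub_at t g).
Proof. by elim: g t => [|b g IH] [X|X l r] //=. Qed.

Lemma sub_at_wf t q u : wf_ctree t -> sub_at t q = Some u -> wf_ctree u.
Proof.
elim: q t => [|b q IH] [X|X l r] wt //=; [by case=> <- | by case=> <- |].
by case: wt => _ _ wl wr; case: b; apply: IH.
Qed.

Lemma sub_at_label t q u : wf_ctree t -> sub_at t q = Some u -> label u \subset label t.
Proof.
elim: q t => [|b q IH] [X|X l r] wt //=; [by case=> <- | by case=> <- |].
case: wt => -> _ wl wr; case: b => tq.
  exact: subset_trans (IH _ wr tq) (subsetUr _ _).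
exact: subset_trans (IH _ wl tq) (subsetUl _ _).
Qed.

Lemma node_label_sub t q : wf_ctree t -> node_label t q \subset label t.
Proof.
rewrite /node_label; case tq: (sub_at t q) => [u|] wt /=; last exact: sub0set.
exact: sub_at_label tq.
Qed.

Lemma node_label_prefix t g h : wf_ctree t -> prefix g h ->
  node_label t h \subset node_label t g.
Proof.
move=> wt /prefixP [q ->]; rewrite /node_label sub_at_cat.
case tg: (sub_at t g) => [u|] /=; last exact: sub0set.
exact: node_label_sub (sub_at_wf wt tg).
Qed.

Lemma disjoint_node_label t g h : wf_ctree t -> ~~ prefix g h -> ~~ prefix h g ->
  [disjoint node_label t g & node_label t h].
Proof.
elim: t g h => [X|X l IHl r IHr] [|b g] [|b' h] //=.
  by rewrite /node_label disjoints_subset sub0set.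
case=> _ dlr wl wr; rewrite /node_label /= -!/(node_label _ _).
case: b; case: b' => //= gh hg; first exact: IHr.
- rewrite disjoint_sym; apply: disjointWl (node_label_sub h wl) _.
  by rewrite disjoint_sym; apply: disjointWl (node_label_sub g wr) _; rewrite disjoint_sym.
- apply: disjointWl (node_label_sub g wl) _.
  by rewrite disjoint_sym; apply: disjointWl (node_label_sub h wr) _; rewrite disjoint_sym.
- exact: IHl.
Qed.

Lemma wf_label_aug_rec acc t q : wf_ctree acc -> wf_ctree t ->
  label acc = ~: label t -> sub_at t q <> None ->
  wf_ctree (aug_rec acc t q) /\ label (aug_rec acc t q) = ~: node_label t q.
Proof.
elim: q acc t => [|b q IH] acc [X|X l r] //= wacc [eX dlr wl wr] lacc tq.
have step a s : X = label a :|: label s -> [disjoint label a & label s] ->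
    wf_ctree a -> wf_ctree s -> sub_at a q <> None ->
    wf_ctree (aug_rec (CNode (~: label a) s acc) a q) /\
    label (aug_rec (CNode (~: label a) s acc) a q) = ~: node_label a q.
  move=> eXas das wa ws aq; apply: IH => //=; split => //.
  - rewrite lacc eXas; apply/setP => x; rewrite !inE.
    by case xa: (x \in label a); rewrite ?(disjointFr das xa) //=; case: (x \in label s).
  - rewrite lacc eXas setCU; apply: disjointWr (subsetIr _ _) _.
    by rewrite disjoint_sym disjoints_subset.
rewrite /node_label /=; case: b tq => tq; last exact: step.
by apply: step; rewrite 1?disjoint_sym // setUC.
Qed.

Lemma wf_label_augtree t p : cluster_tree t -> is_leaf_path t p ->
  wf_ctree (augtree t p) /\ label (augtree t p) = ~: node_label t p.
Proof.
case=> lt wt [+ [Y tp]]; case: p tp => [|b p] // tp _.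
case: t lt wt tp => [X|X l r] //= lt [eX dlr wl wr] tp.
have root a s : label a :|: label s = setT -> [disjoint label a & label s] ->
    wf_ctree a -> wf_ctree s -> sub_at a p = Some (CLeaf Y) ->
    wf_ctree (aug_rec s a p) /\ label (aug_rec s a p) = ~: node_label a p.
  move=> eas das wa ws ap; apply: wf_label_aug_rec => //; last by rewrite ap.
  apply/setP => x; move/setP: eas => /(_ x); rewrite !inE.
  by case xa: (x \in label a) => /=; [rewrite (disjointFr das xa) | move=> ->].
rewrite /node_label /=; case: b tp => tp; last by apply: root; rewrite // -eX.
by apply: root; rewrite 1?disjoint_sym // setUC -eX.
Qed.

Lemma nodes_uniq t : uniq (nodes t).
Proof.
elim: t => [X|X l IHl r IHr] //=.
have cons_inj (b : bool) : injective (cons b) by move=> ? ? [].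
rewrite mem_cat cat_uniq !map_inj_uniq // IHl IHr; apply/and3P; split => //.
  by rewrite negb_or; apply/andP; split; apply/mapP; case.
by rewrite andbT; apply/hasPn => _ /mapP [x _ ->]; apply/mapP; case.
Qed.

End ClusterTrees.

Section PrivateNodes.
Variables (C : numClosedFieldType) (n : nat) (A : 'M[C]_n).
Implicit Types (X Y : {set 'I_n}) (t : ctree n) (g h : seq bool).

Lemma bnd_sub X : bnd A X \subset X.
Proof. by apply/subsetP => x; rewrite inE => /andP []. Qed.

Lemma bnd_subset X Y x : Y \subset X -> x \in Y -> x \in bnd A X -> x \in bnd A Y.
Proof.
move=> YX xY; rewrite !inE xY => /andP [_ /existsP [j /andP [jX Axj]]].
by apply/existsP; exists j; rewrite Axj andbT; apply: contra jX; apply: (subsetP YX).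
Qed.

Lemma inn_coupling X x j : x \in inn A X -> j \notin X -> A x j = 0.
Proof.
rewrite inE inE => /andP [xb xX] jX; apply/eqP; apply: contraNT xb => Axj.
by rewrite xX; apply/existsP; exists j; rewrite jX.
Qed.

Lemma priv_sub_inn t g : priv A t g \subset inn A (node_label t g).
Proof.
rewrite /priv /node_label; case: (sub_at t g) => [[X|X l r]|] //=.
  exact: subsetDl.
exact: sub0set.
Qed.

Lemma priv_sub_label t g : priv A t g \subset node_label t g.
Proof. by apply: subset_trans (priv_sub_inn t g) _; apply: subsetDl. Qed.

Lemma disjoint_priv_bnd t g : [disjoint priv A t g & bnd A (node_label t g)].
Proof.
rewrite disjoints_subset; apply: subset_trans (priv_sub_inn t g) _.
by rewrite /inn setDE subsetIr.
Qed.

(* A private inner node of g lies outside the inner sets of both children of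
   g, hence on the boundary of every proper descendant containing it. *)
Lemma priv_prefix_bnd t g h x : wf_ctree t -> prefix g h -> g != h ->
  x \in priv A t g -> x \in node_label t h -> x \in bnd A (node_label t h).
Proof.
move=> wt /prefixP [[|b q] ->]; first by rewrite cats0 eqxx.
move=> _; rewrite /priv /node_label sub_at_cat.
case tg: (sub_at t g) => [[X|X l r]|] /=; [by move=> _; rewrite inE | | by rewrite inE].
set c := if b then r else l; rewrite -/(node_label c q) => xp xq.
have wc : wf_ctree c by case: (sub_at_wf wt tg) => _ _ wl wr; rewrite /c; case: (b).
have cq := node_label_sub q wc.
have xc := subsetP cq x xq.
apply: bnd_subset cq xq _.
have : x \notin inn A (label c).
  by move: xp; rewrite /c !inE negb_or; case: (b) => /andP [/andP []].
by rewrite /inn inE xc andbT negbK.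
Qed.

End PrivateNodes.

Section FindElimination.
Variables (C : numClosedFieldType) (n : nat) (A Sigma : 'M[C]_n).
Variables (T : ctree n) (p : seq bool) (ord : seq (seq bool)).
Hypotheses (T_tree : cluster_tree T) (p_leaf : is_leaf_path T p).
Hypothesis ord_consistent : consistent_ordering (augtree T p) ord.

Local Notation Tp := (augtree T p).
Local Notation Cl h := (node_label Tp h).
Local Notation S := (priv A Tp).
Local Notation B := (Bnode A Tp).
Local Notation Sgt := (S_gt A T p ord).
Local Notation state u := (state A T p ord Sigma u).
Local Notation gn u := (nth [::] ord u).

Let wf_Tp : wf_ctree Tp := (wf_label_augtree T_tree p_leaf).1.

Lemma ord_uniq : uniq ord.
Proof. by rewrite (perm_uniq ord_consistent.1) nodes_uniq. Qed.

Lemma precede_cases h h' : h \in ord -> h' \in ord -> (index h ord < index h' ord)%N ->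
  [disjoint Cl h & Cl h'] \/ (prefix h' h /\ h' != h).
Proof.
have [perm_ord desc_first] := ord_consistent.
move=> ho ho' lt; have hh' : h' != h by apply: contraTneq lt => ->; rewrite ltnn.
case: (boolP (prefix h' h)) => [|h'h]; first by right.
case: (boolP (prefix h h')) => [hh'p | hh'p]; last by left; apply: disjoint_node_label.
have := desc_first h h'; rewrite -!(perm_mem perm_ord) ho ho' hh'p eq_sym hh' => /(_ isT isT isT isT).
by rewrite ltnNge ltnW.
Qed.

Lemma precede_meet_sub h h' x : h \in ord -> h' \in ord ->
  (index h ord < index h' ord)%N -> x \in Cl h -> x \in Cl h' -> Cl h \subset Cl h'.
Proof.
move=> ho ho' lt xh xh'; case: (precede_cases ho ho' lt) => [dis | [h'h _]].
  by rewrite (disjointFr dis xh) in xh'.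
exact: node_label_prefix.
Qed.

Lemma S_gt_label_bnd h x : h \in ord -> x \in Sgt h -> x \in Cl h -> x \in B h.
Proof.
move=> ho xgt xh; rewrite /S_gt !in_setU in xgt.
case/orP: xgt => [/orP [/bigcup_seqP [h' + xS] | xb] | xr].
- rewrite mem_drop_uniq ?ord_uniq // => /andP [ho' lt].
  case: (precede_cases ho ho' lt) => [dis | [h'h neq]].
    by have := subsetP (priv_sub_label A Tp h') x xS; rewrite (disjointFr dis xh).
  exact: (priv_prefix_bnd wf_Tp h'h neq xS xh).
- exact: bnd_subset (node_label_sub h wf_Tp) xh xb.
- have := subsetP (node_label_sub h wf_Tp) x xh.
  by rewrite (wf_label_augtree T_tree p_leaf).2 inE xr.
Qed.

Lemma S_gt_antitone h h' : (index h ord <= index h' ord)%N -> Sgt h' \subset Sgt h.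
Proof.
move=> le; apply/subsetP => x; rewrite /S_gt !inE.
case/orP => [/orP [/bigcup_seqP [k + xk] | ->] | ->]; rewrite ?orbT //.
rewrite mem_drop_uniq ?ord_uniq // => /andP [ko lt].
apply/orP; left; apply/orP; left; apply/bigcup_seqP; exists k => //.
by rewrite mem_drop_uniq ?ord_uniq // ko (leq_ltn_trans le).
Qed.

Lemma priv_sub_S_gt h h' : h' \in ord -> (index h ord < index h' ord)%N -> S h' \subset Sgt h.
Proof.
move=> ho' lt; apply/subsetP => x xS; rewrite /S_gt !inE.
apply/orP; left; apply/orP; left; apply/bigcup_seqP; exists h' => //.
by rewrite mem_drop_uniq ?ord_uniq // ho'.
Qed.

Lemma S_le_notin_B g x : g \in ord -> x \in S_le A T p ord g -> x \notin B g.
Proof.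
move=> go /bigcup_seqP [h ht xS]; have ho := mem_take ht.
have xh := subsetP (priv_sub_label A Tp h) x xS.
move: ht; rewrite in_take // ltnS leq_eqVlt => /orP [/eqP e | lt].
  have -> : g = h by rewrite -(nth_index [::] ho) e nth_index.
  by rewrite (disjointFr (disjoint_priv_bnd A Tp h) xS).
case: (precede_cases ho go lt) => [dis | [gh _]].
  by apply: contraL xh => /(subsetP (bnd_sub A _)) xg; rewrite (disjointFl dis xg).
apply/negP => /(bnd_subset (node_label_prefix wf_Tp gh) xh).
by rewrite (disjointFr (disjoint_priv_bnd A Tp h) xS).
Qed.

Hypothesis A_sym : forall i j, (A i j != 0) = (A j i != 0).
Hypothesis Sigma_sparse : forall i j, i != j -> A i j = 0 -> Sigma i j = 0.

Definition decoupled (X : 'M[C]_n) h :=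
  forall x y, x \in S h -> y \in Sgt h :\: B h -> X x y = 0 /\ X y x = 0.

(* S_h lies inside C_h, away from its boundary, while S_{>h} \ B_h lies
   outside C_h; A, hence Sigma, has no entries between the two. *)
Lemma Sigma_decoupled h : h \in ord -> decoupled Sigma h.
Proof.
move=> ho x y xS; rewrite in_setD => /andP [yB ygt].
have xinn := subsetP (priv_sub_inn A Tp h) x xS.
have yh : y \notin Cl h by apply: contra yB; apply: S_gt_label_bnd.
have Axy : A x y = 0 by apply: inn_coupling xinn yh.
have Ayx : A y x = 0 by apply/eqP; rewrite -[_ == _]negbK -A_sym Axy eqxx.
have xy : x != y by apply: contraNneq yh => <-; rewrite (subsetP (subsetDl _ _) x xinn).
by split; apply: Sigma_sparse; rewrite // eq_sym.
Qed.

Lemma state_succ u : (u < size ord)%N -> state u.+1 = elim_step A T p (state u) (gn u).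
Proof. by move=> lt; rewrite /Defs.state (take_nth [::]) // foldl_rcons. Qed.

Lemma state_succ_frame u x y : (u < size ord)%N -> decoupled (state u).2 (gn u) ->
  x \in Sgt (gn u) :\: B (gn u) ->
  (state u.+1).2 x y = (state u).2 x y /\ (state u.+1).2 y x = (state u).2 y x.
Proof.
move=> lt dec xK; have xB : x \notin B (gn u) by move: xK; rewrite in_setD => /andP [].
have dSB : [disjoint S (gn u) & B (gn u)] := disjoint_priv_bnd A Tp (gn u).
rewrite state_succ //= /Lmat.
by split; apply: (congr_elim_entry _ dSB);
  do ?[by left | by right | by right => k kS; case: (dec k x kS xK)].
Qed.

Lemma state_decoupled u h : h \in ord -> (u <= index h ord)%N -> decoupled (state u).2 h.
Proof.
elim: u h => [|u IH] h ho uh x y xS yK.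
  by rewrite /Defs.state take0; apply: (Sigma_decoupled ho).
have hsz : (index h ord < size ord)%N by rewrite index_mem.
have usz : (u < size ord)%N := leq_trans uh (ltnW hsz).
have go : gn u \in ord by rewrite mem_nth.
have ig : index (gn u) ord = u by rewrite index_uniq ?ord_uniq.
have lt : (index (gn u) ord < index h ord)%N by rewrite ig.
have decg : decoupled (state u).2 (gn u) by apply: IH; rewrite ?ig.
have [xy yx] := IH h ho (ltnW uh) x y xS yK.
case xB: (x \in B (gn u)).
  have ygt : y \in Sgt (gn u).
    by move: yK; rewrite in_setD => /andP [_ /(subsetP (S_gt_antitone (ltnW lt)))].
  have xg : x \in Cl (gn u) := subsetP (bnd_sub A _) x xB.
  have xh : x \in Cl h := subsetP (priv_sub_label A Tp h) x xS.
  have gh := precede_meet_sub go ho lt xg xh.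
  have yB : y \notin B (gn u).
    apply/negP => yB; move: yK; rewrite in_setD => /andP [/negP yBh ygth]; apply: yBh.
    by apply: (S_gt_label_bnd ho ygth); apply: (subsetP gh); apply: (subsetP (bnd_sub A _)).
  have yK' : y \in Sgt (gn u) :\: B (gn u) by rewrite in_setD yB ygt.
  by have [-> ->] := state_succ_frame x usz decg yK'.
have xK : x \in Sgt (gn u) :\: B (gn u).
  by rewrite in_setD xB (subsetP (priv_sub_S_gt ho lt)).
by have [-> ->] := state_succ_frame y usz decg xK.
Qed.

Lemma state_succ_S_le u x y : (u < size ord)%N ->
  x \in S_le A T p ord (gn u) -> y \in S_le A T p ord (gn u) ->
  (state u.+1).2 x y = (state u).2 x y.
Proof.
move=> lt xle yle; have go : gn u \in ord by rewrite mem_nth.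
have dSB : [disjoint S (gn u) & B (gn u)] := disjoint_priv_bnd A Tp (gn u).
rewrite state_succ //= /Lmat; apply: (congr_elim_entry _ dSB);
  by left; apply: S_le_notin_B.
Qed.

End FindElimination.

Unset Implicit Arguments.

Theorem theorem3 (C : numClosedFieldType) (n : nat)
  (A Sigma : 'M[C]_n) (T : ctree n) (p : seq bool) (ord : seq (seq bool)) :
  A \in unitmx ->
  (forall i j, (A i j != 0) = (A j i != 0)) ->
  (forall i j, i != j -> A i j = 0 -> Sigma i j = 0) ->
  cluster_tree T ->
  is_leaf_path T p ->
  consistent_ordering (augtree T p) ord ->
  (* A_g(S_g,S_g) is invertible at every elimination step *)
  (forall t, (t < size ord)%N ->
     let g := nth [::] ord t in
     subm (priv A (augtree T p) g) (priv A (augtree T p) g)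
          (state A T p ord Sigma t).1 \in unitmx) ->
  forall t, (t < size ord)%N ->
  let g := nth [::] ord t in
  let Tp := augtree T p in
  let Ag := (state A T p ord Sigma t).1 in
  let Sg := (state A T p ord Sigma t).2 in
  let Sgp := (state A T p ord Sigma t.+1).2 in
  let S := priv A Tp in
  let B := Bnode A Tp in
  let Sgt := S_gt A T p ord in
  let Sle := S_le A T p ord in
  let Lg := Lcal A T p Ag g in
  (* (I) *)
  (forall h, h \in ord -> (index g ord <= index h ord)%N ->
     subm (S h) (Sgt h :\: B h) Sg = 0 /\ subm (Sgt h :\: B h) (S h) Sg = 0) /\
  (* (II) *)
  (subm (Sle g) (Sle g) Sgp = subm (Sle g) (Sle g) Sg /\
   subm setT (Sgt g :\: B g) Sgp = subm setT (Sgt g :\: B g) Sg /\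
   subm (Sgt g :\: B g) setT Sgp = subm (Sgt g :\: B g) setT Sg) /\
  (* (III) *)
  subm (B g) (B g) Sgp =
    subm (B g) (B g) Sg - Lg *m subm (S g) (B g) Sg
    - subm (B g) (S g) Sg *m ctr Lg + Lg *m subm (S g) (S g) Sg *m ctr Lg.
Proof.
move=> _ A_sym Sigma_sparse T_tree p_leaf ord_cons _ t lt g Tp Ag Sg Sgp S B Sgt Sle Lg.
have ig : index g ord = t by rewrite index_uniq // (ord_uniq ord_cons).
have dec h : h \in ord -> (t <= index h ord)%N -> decoupled A T p ord Sg h.
  exact: state_decoupled.
split.
  move=> h ho; rewrite ig => th.
  split; apply: subm_eq0 => x y xR yK.
    by case: (dec h ho th x y xR yK).
  by case: (dec h ho th y x yK xR).
have decg := dec g (mem_nth [::] lt) (eq_leq (esym ig)).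
split; first split.
- apply: subm_eq => x y xS yS; exact: state_succ_S_le.
- split; apply: subm_eq => x y xK yK.
    by have [_ ->] := state_succ_frame x lt decg yK.
  by have [-> _] := state_succ_frame y lt decg xK.
- rewrite /Sgp state_succ //=; apply: subm_congr_elim.
  exact: disjoint_priv_bnd.
Qed.
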